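(* Let $\kappa$ be a regular uncountable cardinal and let $\mu,\lambda,\chi,\theta\le\kappa$ be cardinals satisfying $\lambda^{<\chi}<\kappa\le 2^\lambda$ and $\lambda^{<\chi}\le\theta^{<\chi}=\theta$. Then for every partition $p:[\kappa]^2\to\mu$, $\mathrm{pr}_1(\kappa,\kappa,\theta,\chi)_p$ holds if and only if $\mathrm{pr}_0(\kappa,\kappa,\theta,\chi)_p$ holds.
   Context: $[\kappa]^2$ denotes the set of pairs $(\alpha,\beta)$ with $\alpha<\beta<\kappa$; a partition is any function $p:[\kappa]^2\to\mu$. For an ordinal $\sigma$, $[\kappa]^\sigma$ is the set of subsets of $\kappa$ of order type $\sigma$, and for $a\in[\kappa]^\sigma$ and $i<\sigma$, $a(i)$ is the $i$-th element of $a$ in increasing order. For sets of ordinals $a,b$, $a<b$ means $\alpha<\beta$ for all $\alpha\in a,\beta\in b$. Given a partition $p:[\kappa]^2\to\mu$, a coloring $c:[\kappa]^2\to\theta$ witnesses (i) $\mathrm{pr}_1(\kappa,\kappa,\theta,\chi)_p$ iff for every ordinal $\sigma<\chi$, every pairwise disjoint family $\mathcal A\subseteq[\kappa]^\sigma$ with $|\mathcal A|=\kappa$, and every function $\tau:\mu\to\theta$, there are $a,b\in\mathcal A$ with $a<b$ such that $c(\alpha,\beta)=\tau(p(\alpha,\beta))$ for all $\alpha\in a,\beta\in b$; (ii) $\mathrm{pr}_0(\kappa,\kappa,\theta,\chi)_p$ iff for every ordinal $\sigma<\chi$, every pairwise disjoint family $\mathcal A\subseteq[\kappa]^\sigma$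 with $|\mathcal A|=\kappa$, and every matrix $(\tau_{i,j})_{i,j<\sigma}$ of functions from $\mu$ to $\theta$, there are $a,b\in\mathcal A$ with $a<b$ such that $c(a(i),b(j))=\tau_{i,j}(p(a(i),b(j)))$ for all $i,j<\sigma$. The principles $\mathrm{pr}_i(\kappa,\kappa,\theta,\chi)_p$ assert that such a coloring exists. *)

(* Cardinals are represented by types (compared via injections);
   ordinals by strictly well-ordered types. *)
Set Implicit Arguments.

Definition card_le (A B : Type) : Prop := exists f : A -> B, forall x y, f x = f y -> x = y.
Definition card_lt (A B : Type) : Prop := card_le A B /\ ~ card_le B A.

Definition strict_wellorder (A : Type) (R : A -> A -> Prop) : Prop :=
  (forall x y z, R x y -> R y z -> R x z) /\
  (forall x y, R x y \/ x = y \/ R y x) /\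
  well_founded R.

Definition initial_ordinal (K : Type) (ltK : K -> K -> Prop) : Prop :=
  strict_wellorder ltK /\ forall y : K, card_lt {x : K | ltK x y} K.

Definition regular_uncountable (K : Type) (ltK : K -> K -> Prop) : Prop :=
  initial_ordinal ltK /\
  card_lt nat K /\
  (forall P : K -> Prop, card_lt {x : K | P x} K -> exists y, forall x, P x -> ltK x y).

(* Z is (a set of cardinality) L^{<X} = sup { |L|^|N| : |N| < |X| } *)
Definition is_pow_lt (L X Z : Type) : Prop :=
  (forall N : Type, card_lt N X -> card_le (N -> L) Z) /\
  (forall W : Type, (forall N : Type, card_lt N X -> card_le (N -> L) W) -> card_le Z W).

(* A pairwise disjoint family of size kappa of elements of [kappa]^sigma,
   where sigma = (S, RS); members are given by their increasing enumerations
   F x : S -> K, indexed bijectively by K. *)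
Definition disjoint_family (K : Type) (ltK : K -> K -> Prop)
    (S : Type) (RS : S -> S -> Prop) (F : K -> S -> K) : Prop :=
  (forall x i j, RS i j -> ltK (F x i) (F x j)) /\
  (forall x y, x <> y ->
     ~ (forall k, (exists i, F x i = k) <-> (exists j, F y j = k))) /\
  (forall x y, x <> y -> forall i j, F x i <> F y j).

Definition pr1_witness (K : Type) (ltK : K -> K -> Prop) (M T X : Type)
    (p : K -> K -> M) (c : K -> K -> T) : Prop :=
  forall (S : Type) (RS : S -> S -> Prop), strict_wellorder RS -> card_lt S X ->
  forall F : K -> S -> K, disjoint_family ltK RS F ->
  forall tau : M -> T,
  exists x y, (forall i j, ltK (F x i) (F y j)) /\
    (forall i j, c (F x i) (F y j) = tau (p (F x i) (F y j))).

Definition pr0_witness (K : Type) (ltK : K -> K -> Prop) (M T X : Type)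
    (p : K -> K -> M) (c : K -> K -> T) : Prop :=
  forall (S : Type) (RS : S -> S -> Prop), strict_wellorder RS -> card_lt S X ->
  forall F : K -> S -> K, disjoint_family ltK RS F ->
  forall tau : S -> S -> M -> T,
  exists x y, (forall i j, ltK (F x i) (F y j)) /\
    (forall i j, c (F x i) (F y j) = tau i j (p (F x i) (F y j))).

Definition pr1 (K : Type) (ltK : K -> K -> Prop) (M T X : Type) (p : K -> K -> M) : Prop :=
  exists c : K -> K -> T, @pr1_witness K ltK M T X p c.
Definition pr0 (K : Type) (ltK : K -> K -> Prop) (M T X : Type) (p : K -> K -> M) : Prop :=
  exists c : K -> K -> T, @pr0_witness K ltK M T X p c.

From Stdlib Require Import Classical ClassicalEpsilon FunctionalExtensionality ProofIrrelevance.
From Stdlib Require Import List Wellfounded.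
From mathcomp Require Import ssreflect ssrfun ssrbool eqtype ssrnat fintype finfun.

Set Implicit Arguments.
Unset Strict Implicit.

(* pr0 trivially gives pr1, with a constant matrix.  Conversely, let c witness
   pr1 and fix an injection h : kappa -> 2^lambda.  For a member a of a disjoint
   family, of order type sigma < chi, choose for each pair i <> j of positions a
   coordinate l < lambda where h(a(i)) and h(a(j)) differ, together with the bit
   h(a(i))(l).  This signature ranges over a set of size lambda^{<chi} < kappa, so
   by regularity kappa many members share one signature sg; for them the position
   i is recovered from h(a(i)) alone, as the unique k such that h(a(i)) takes the
   bit recorded by sg(k, l) at every coordinate recorded by sg(k, l), l <> k.
   As theta^{<chi} = theta, the pair of sg and a matrix of colourings is coded by
   a single colour.  The new colouring reads such a code off c(alpha, beta),
   decodes the positions i and j of alpha and beta, and applies the (i, j)-th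
   colouring; pr1 for c applied to the colouring m |-> code(sg, tau(-, -)(m))
   yields pr0. *)

(** * Choice and cardinal comparison *)

Lemma sval_inj A (P : A -> Prop) : injective (@proj1_sig A P).
Proof. exact: eq_sig_hprop (fun _ => proof_irrelevance _). Qed.

Definition opick A (P : A -> Prop) : option A :=
  match excluded_middle_informative (exists a, P a) with
  | left H => Some (proj1_sig (constructive_indefinite_description _ H))
  | right _ => None
  end.

Lemma opick_unique A (P : A -> Prop) a : (forall b, P b <-> b = a) -> opick P = Some a.
Proof.
move=> HP; rewrite /opick; case: excluded_middle_informative => [H|[]].
  by case: constructive_indefinite_description => b /= /HP ->.
by exists a; apply/HP.
Qed.

Lemma opick_some A (P : A -> Prop) a : opick P = Some a -> P a.
Proof.
rewrite /opick; case: excluded_middle_informative => // H [<-].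
by case: constructive_indefinite_description.
Qed.

Lemma opick_none A (P : A -> Prop) : opick P = None -> forall a, ~ P a.
Proof.
rewrite /opick; case: excluded_middle_informative => // H _ a Ha.
by apply: H; exists a.
Qed.

Definition partial_inv A B (f : A -> B) (b : B) : option A := opick (fun a => f a = b).

Lemma partial_inv_some A B (f : A -> B) a b : partial_inv f b = Some a -> f a = b.
Proof. exact: opick_some. Qed.

Lemma partial_inv_none A B (f : A -> B) b : partial_inv f b = None -> forall a, f a <> b.
Proof. exact: opick_none. Qed.

Lemma partial_invK A B (f : A -> B) : injective f -> pcancel f (partial_inv f).
Proof. by move=> Hf a; apply: opick_unique => b; split=> [/Hf|->]. Qed.

Lemma card_le_refl A : card_le A A.
Proof. by exists id. Qed.

Lemma card_le_trans A B C : card_le A B -> card_le B C -> card_le A C.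
Proof. by move=> [f Hf] [g Hg]; exists (g \o f); apply: inj_comp. Qed.

Lemma card_le_lt_trans A B C : card_le A B -> card_lt B C -> card_lt A C.
Proof.
move=> HAB [HBC HCB]; split; first exact: card_le_trans HAB HBC.
by move=> HCA; apply: HCB; apply: card_le_trans HCA HAB.
Qed.

Lemma card_le_sig A (P : A -> Prop) : card_le {x | P x} A.
Proof. exists sval; exact: sval_inj. Qed.

Lemma card_le_image A B (f : A -> B) : card_le {b | exists a, f a = b} A.
Proof.
exists (fun b : {b | exists a, f a = b} =>
  proj1_sig (constructive_indefinite_description (fun a => f a = sval b) (proj2_sig b))).
move=> b1 b2 E; apply: sval_inj; move: E.
case: constructive_indefinite_description => a1 /= <-.
by case: constructive_indefinite_description => a2 /= <- ->.
Qed.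

Lemma card_le_prod A A' B B' : card_le A A' -> card_le B B' -> card_le (A * B) (A' * B').
Proof.
move=> [f Hf] [g Hg]; exists (fun x => (f x.1, g x.2)).
by move=> [a b] [a' b'] [/Hf -> /Hg ->].
Qed.

Lemma card_le_sigT A (B : A -> Type) C :
  (forall a, card_le (B a) C) -> card_le {a : A & B a} (A * C).
Proof.
move=> HB; pose f a := proj1_sig (constructive_indefinite_description _ (HB a)).
have Hf a : injective (f a) by rewrite /f; case: constructive_indefinite_description.
exists (fun x => (projT1 x, f (projT1 x) (projT2 x))).
by move=> [a x] [a' y] /= [Ea]; subst a' => /Hf ->.
Qed.

Lemma card_le_arrow_cod A C D : card_le C D -> card_le (A -> C) (A -> D).
Proof.
move=> [f Hf]; exists (fun g => f \o g) => g1 g2 E.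
by apply: functional_extensionality => a; apply: Hf; apply: (f_equal (@^~ a) E).
Qed.

Lemma card_le_arrow_dom A B C : C -> card_le A B -> card_le (A -> C) (B -> C).
Proof.
move=> c0 [f Hf]; exists (fun g b => odflt c0 (omap g (partial_inv f b))) => g1 g2 E.
apply: functional_extensionality => a.
by have := f_equal (@^~ (f a)) E; rewrite /= partial_invK.
Qed.

Lemma card_le_arrow_pair A C D : card_le ((A -> C) * (A -> D)) (A -> C * D).
Proof.
exists (fun g a => (g.1 a, g.2 a)) => [[f g] [f' g'] E].
have E' a : (f a, g a) = (f' a, g' a) by apply: (f_equal (@^~ a) E).
by congr (_, _); apply: functional_extensionality => a; case: (E' a).
Qed.

Lemma card_le_curry A B C : card_le (A -> B -> C) (A * B -> C).
Proof.
exists (fun f x => f x.1 x.2) => f g E.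
do 2![apply: functional_extensionality => ?]; exact: (f_equal (@^~ (_, _)) E).
Qed.

Lemma card_le_arrow_bool A : card_le A (A -> bool).
Proof.
exists (fun a b => is_left (excluded_middle_informative (a = b))) => a b E.
have := f_equal (@^~ b) E => /=.
by do 2!case: excluded_middle_informative.
Qed.

Lemma cantor A : ~ card_le (A -> bool) A.
Proof.
move=> [g Hg]; pose D a := if partial_inv g a is Some f then ~~ f a else true.
have : D (g D) = ~~ D (g D) by rewrite {1}/D partial_invK.
by case: (D (g D)).
Qed.

Definition finite (A : Type) := exists n, card_le A 'I_n.

Lemma finite_card_le A B : card_le A B -> finite B -> finite A.
Proof. by move=> HAB [n HB]; exists n; apply: card_le_trans HAB HB. Qed.

Lemma finite_option A : finite A -> finite (option A).
Proof.
move=> [n [g Hg]]; exists n.+1.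
exists (fun o => if o is Some a then widen_ord (leqnSn n) (g a) else ord_max).
have lt_max (a : A) : widen_ord (leqnSn n) (g a) <> ord_max.
  by move/(f_equal val) => /= E; have := ltn_ord (g a); rewrite E ltnn.
move=> [a|] [b|] //; last by move/esym/lt_max.
  by move/(f_equal val) => /= /val_inj /Hg ->.
by move/lt_max.
Qed.

Lemma finite_prod A B : finite A -> finite B -> finite (A * B).
Proof.
move=> [n [g Hg]] [m [g' Hg']]; exists #|{: 'I_n * 'I_m}|.
exists (fun x => enum_rank (g x.1, g' x.2)).
by move=> [a b] [c d] /enum_rank_inj [] /Hg -> /Hg' ->.
Qed.

Lemma finite_arrow_bool A : finite A -> finite (A -> bool).
Proof.
move=> [n Hn]; apply: finite_card_le (card_le_arrow_dom true Hn) _.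
exists #|{: {ffun 'I_n -> bool}}|; exists (fun f => enum_rank (finfun f)).
move=> f g /enum_rank_inj E; apply: functional_extensionality => i.
by have := f_equal (fun h : {ffun _ -> bool} => h i) E; rewrite !ffunE.
Qed.

Lemma nat_not_finite : ~ finite nat.
Proof.
move=> [n [g Hg]].
have Hinj : injective (fun i : 'I_n.+1 => g i) by move=> i j /Hg /val_inj.
by have := leq_card _ Hinj; rewrite !card_ord ltnn.
Qed.

Lemma finite_list A (l : list A) : (forall a, In a l) -> finite A.
Proof.
move=> Hl; case: (classic (inhabited A)) => [[a0]|HA]; last first.
  by exists 0, (fun a => False_rect _ (HA (inhabits a))) => a; case: HA.
have Hnth a : exists i : 'I_(length l), List.nth i l a0 = a.
  by have [i [/ltP Hi <-]] := In_nth l a a0 (Hl a); exists (Ordinal Hi).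
exists (length l), (fun a => proj1_sig (constructive_indefinite_description _ (Hnth a))).
move=> a b; case: constructive_indefinite_description => i /= <-.
by case: constructive_indefinite_description => j /= <- ->.
Qed.

Lemma infinite_card_le_nat A : ~ finite A -> card_le nat A.
Proof.
move=> Hinf; case: (classic (inhabited A)) => [inh|HA]; last first.
  by case: Hinf; apply: (@finite_list _ nil) => a; case: HA.
pose next (l : list A) := epsilon inh (fun a => ~ In a l).
have Hnext l : ~ In (next l) l.
  apply: (epsilon_spec inh (fun a => ~ In a l)); apply: NNPP => Hl.
  by apply: Hinf; apply: (finite_list (l := l)) => a; apply: NNPP => Ha; apply: Hl; exists a.
pose fix prefix n := if n is n'.+1 then next (prefix n') :: prefix n' else nil.
have Hprefix m n : m < n -> In (next (prefix m)) (prefix n).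
  elim: n => // n IH; rewrite ltnS leq_eqVlt => /orP [/eqP ->|/IH]; [left|right] => //.
exists (fun n => next (prefix n)) => m n Emn.
case: (ltngtP m n) => // Hmn.
  by case: (Hnext (prefix n)); rewrite -{1}Emn; apply: Hprefix.
by case: (Hnext (prefix m)); rewrite {1}Emn; apply: Hprefix.
Qed.

Lemma infinite_card_le_option A : ~ finite A -> card_le (option A) A.
Proof.
move=> /infinite_card_le_nat [e He].
pose shift a := if partial_inv e a is Some n then e n.+1 else a.
have shift_neq0 a : shift a <> e 0.
  rewrite /shift; case Ea: (partial_inv e a) => [n|]; first by move/He.
  by move=> E; exact: (partial_inv_none Ea (esym E)).
have shift_inj : injective shift.
  move=> a b; rewrite /shift.
  case Ea: (partial_inv e a) => [n|]; case Eb: (partial_inv e b) => [m|].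
  - by move/He => [Enm]; rewrite -(partial_inv_some Ea) -(partial_inv_some Eb) Enm.
  - by move=> E; case: (partial_inv_none Eb E).
  - by move=> E; case: (partial_inv_none Ea (esym E)).
  - done.
exists (fun o => if o is Some a then shift a else e 0).
by move=> [a|] [b|] //= => [/shift_inj->|/shift_neq0|/esym/shift_neq0].
Qed.

Lemma card_le_ord_arrow L : L -> card_le (L * L) L -> forall n, card_le ('I_n -> L) L.
Proof.
move=> l0 HLL; elim=> [|n IH].
  by exists (fun _ => l0) => f g _; apply: functional_extensionality => - [].
apply: card_le_trans (card_le_trans (card_le_prod (card_le_refl L) IH) HLL).
exists (fun f => (f ord_max, fun i : 'I_n => f (widen_ord (leqnSn n) i))) => f g [E1 E2].
apply: functional_extensionality => k; case: (ltnP k n) => Hk.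
  have -> : k = widen_ord (leqnSn n) (Ordinal Hk) by apply: val_inj.
  exact: (f_equal (@^~ (Ordinal Hk)) E2).
have -> : k = ord_max by apply: val_inj; apply/eqP; rewrite eqn_leq Hk -ltnS ltn_ord.
exact: E1.
Qed.

Lemma card_le_finite_arrow A L : L -> card_le (L * L) L -> finite A -> card_le (A -> L) L.
Proof.
move=> l0 HLL [n HA].
exact: card_le_trans (card_le_arrow_dom l0 HA) (card_le_ord_arrow l0 HLL n).
Qed.

(** * Well-orders *)

Lemma wf_irrefl A (R : A -> A -> Prop) : well_founded R -> forall x, ~ R x x.
Proof. by move=> wf x; elim: (wf x) => y _ IH Ryy; apply: (IH y Ryy Ryy). Qed.

Lemma wf_minimal A (R : A -> A -> Prop) (P : A -> Prop) :
  well_founded R -> (exists x, P x) -> exists x, P x /\ forall y, R y x -> ~ P y.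
Proof.
move=> wf [x]; elim: (wf x) => y _ IH Py.
case: (classic (exists z, R z y /\ P z)) => [[z [Rzy Pz]]|Hmin]; first exact: IH Rzy Pz.
by exists y; split=> // z Rzy Pz; apply: Hmin; exists z.
Qed.

Lemma strict_wellorder_preimage A B (R : B -> B -> Prop) (f : A -> B) :
  strict_wellorder R -> injective f -> strict_wellorder (fun x y => R (f x) (f y)).
Proof.
move=> [Htr [Htot Hwf]] Hf; split; [|split].
- by move=> x y z; apply: Htr.
- by move=> x y; case: (Htot (f x) (f y)) => [|[/Hf|]]; auto.
- exact: wf_inverse_image.
Qed.

Lemma strict_mono_inj A B (RA : A -> A -> Prop) (RB : B -> B -> Prop) (f : A -> B) :
  strict_wellorder RA -> well_founded RB -> (forall x y, RA x y -> RB (f x) (f y)) ->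
  injective f.
Proof.
move=> [_ [Htot _]] HwfB Hf x y Exy.
by case: (Htot x y) => [/Hf|[//|/Hf]]; rewrite Exy => /(wf_irrefl HwfB).
Qed.

Definition seg A (R : A -> A -> Prop) (a : A) := {x : A | R x a}.

Definition lex A B (RA : A -> A -> Prop) (RB : B -> B -> Prop) (p q : A * B) :=
  RA p.1 q.1 \/ (p.1 = q.1 /\ RB p.2 q.2).

Lemma strict_wellorder_lex A B (RA : A -> A -> Prop) (RB : B -> B -> Prop) :
  strict_wellorder RA -> strict_wellorder RB -> strict_wellorder (lex RA RB).
Proof.
move=> [Htr [Htot Hwf]] [Htr' [Htot' Hwf']]; split; [|split].
- by move=> [a b] [c d] [e g]; rewrite /lex /=; intuition; subst; eauto.
- move=> [a b] [c d]; rewrite /lex /=.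
  case: (Htot a c) => [|[<-|]]; auto.
  by case: (Htot' b d) => [|[<-|]]; auto.
- suff Hacc a b : Acc (lex RA RB) (a, b) by move=> [a b].
  elim: (Hwf a) b => {}a _ IHa b; elim: (Hwf' b) => {}b _ IHb.
  by constructor=> [[c d]] [/IHa|/= [-> /IHb]].
Qed.

Lemma least_outside_image W B (RB : B -> B -> Prop) (P : W -> Prop) (f : W -> B) :
  well_founded RB -> ~ card_le B {w | P w} ->
  exists b, (forall v, P v -> f v <> b) /\ (forall b', RB b' b -> exists v, P v /\ f v = b').
Proof.
move=> HwfB Hsmall.
have [b [Hb Hmin]] : exists b, (forall v, P v -> f v <> b) /\
    forall b', RB b' b -> ~ (forall v, P v -> f v <> b').
  apply: wf_minimal HwfB _; apply: NNPP => Hall; apply: Hsmall.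
  have Hcov b : exists v, P v /\ f v = b.
    by apply: NNPP => Hb; apply: Hall; exists b => v Hv Ev; apply: Hb; exists v.
  exists (fun b => exist P _ (proj1 (proj2_sig (constructive_indefinite_description _ (Hcov b))))).
  move=> b1 b2 /(f_equal sval) /=.
  case: constructive_indefinite_description => v1 /= [H1 E1].
  case: constructive_indefinite_description => v2 /= [H2 E2] Ev.
  by rewrite -E1 -E2 Ev.
exists b; split=> // b' /Hmin Hb'.
by apply: NNPP => Hnot; apply: Hb' => v Hv Ev; apply: Hnot; exists v.
Qed.

(* [f w] is the least element of [B] outside [f] of the segment below [w]. *)
Lemma segment_embedding W B (RW : W -> W -> Prop) (RB : B -> B -> Prop) :
  strict_wellorder RW -> strict_wellorder RB -> (forall w, ~ card_le B (seg RW w)) ->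
  exists f : W -> B, (forall v w, RW v w -> RB (f v) (f w)) /\
    (forall w b, RB b (f w) -> exists v, RW v w /\ f v = b).
Proof.
move=> [HtrW [_ HwfW]] [_ [HtotB HwfB]] Hsmall.
case: (classic (inhabited B)) => [inhB|HB]; last first.
  have HW (w : W) : False.
    by apply: (Hsmall w); exists (fun b => False_rect _ (HB (inhabits b))) => b; case: HB.
  by exists (fun w => False_rect _ (HW w)); split=> w; case: (HW w).
pose step w (rec : forall v, RW v w -> B) := epsilon inhB (fun b =>
  (forall v (Hv : RW v w), rec v Hv <> b) /\
  (forall b', RB b' b -> exists v (Hv : RW v w), rec v Hv = b')).
pose f := Fix HwfW (fun _ => B) step.
have Ef w : f w = step w (fun v _ => f v).
  rewrite /f Fix_eq // => x g g' E; congr (step x _).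
  by do 2!apply: functional_extensionality_dep => ?.
have Hf w : (forall v, RW v w -> f v <> f w) /\
            (forall b, RB b (f w) -> exists v, RW v w /\ f v = b).
  have Hex : exists b, (forall v (Hv : RW v w), f v <> b) /\
      (forall b', RB b' b -> exists v (Hv : RW v w), f v = b').
    have [b [Hb Hcov]] := least_outside_image f HwfB (Hsmall w).
    by exists b; split=> [v Hv|b' /Hcov [v [Hv Ev]]]; [apply: Hb | exists v, Hv].
  have [] : (forall v (Hv : RW v w), f v <> f w) /\
      (forall b', RB b' (f w) -> exists v (Hv : RW v w), f v = b').
    by rewrite [f w]Ef; exact: epsilon_spec inhB _ Hex.
  by move=> Hne Hcov; split=> [v /Hne|b' /Hcov [v [Hv Ev]]] //; exists v.
exists f; split=> [v w Hvw|w b]; last exact: (proj2 (Hf w)).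
case: (HtotB (f v) (f w)) => [//|[Evw|Hwv]]; first by case: (proj1 (Hf w) v Hvw).
have [u [Huv Eu]] := proj2 (Hf v) _ Hwv.
by case: (proj1 (Hf w) u (HtrW _ _ _ Huv Hvw)).
Qed.

Lemma segment_iso S T (RS : S -> S -> Prop) (RT : T -> T -> Prop) :
  strict_wellorder RS -> strict_wellorder RT -> card_lt S T ->
  exists t0 (i : S -> seg RT t0) (j : seg RT t0 -> S), cancel i j /\ cancel j i.
Proof.
move=> HRS HRT [_ HTS]; have [_ [HtotT HwfT]] := HRT.
have [f [Hmono Hdown]] :=
  segment_embedding HRS HRT (fun s Hle => HTS (card_le_trans Hle (card_le_sig _))).
have finj := strict_mono_inj HRS HwfT Hmono.
have [t0 [Ht0 Hmin]] :
    exists t0, (~ exists s, f s = t0) /\ forall t, RT t t0 -> ~ ~ exists s, f s = t.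
  apply: wf_minimal HwfT _; apply: NNPP => Hsurj; apply: HTS.
  have Hall t : exists s, f s = t by apply: NNPP => Ht; apply: Hsurj; exists t.
  apply: card_le_trans (card_le_image f).
  by exists (fun t => exist _ t (Hall t)) => t t' /(f_equal sval).
have Hbelow s : RT (f s) t0.
  case: (HtotT (f s) t0) => [//|[Es|/Hdown [v [_ Ev]]]]; case: Ht0; by [exists s|exists v].
have Hcov (t : seg RT t0) : exists s, f s = sval t by apply: NNPP; apply: Hmin (proj2_sig t).
exists t0, (fun s => exist _ (f s) (Hbelow s)),
  (fun t => proj1_sig (constructive_indefinite_description _ (Hcov t))).
split=> [s|t]; case: constructive_indefinite_description => s' /=; first exact: finj.
by move=> Es'; apply: sval_inj.
Qed.

(** * Hessenberg's theorem *)

Section GoedelOrder.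
Variables (A : Type) (R : A -> A -> Prop).
Hypothesis HR : strict_wellorder R.

Definition gmax (a b : A) := if excluded_middle_informative (R a b) then b else a.

Definition goedel_lt (p q : A * A) :=
  lex R (lex R R) (gmax p.1 p.2, p) (gmax q.1 q.2, q).

Lemma goedel_lt_wellorder : strict_wellorder goedel_lt.
Proof.
apply: (strict_wellorder_preimage (f := fun p => (gmax p.1 p.2, p))).
  by do 2?apply: strict_wellorder_lex.
by move=> p q [].
Qed.

Let le x y := R x y \/ x = y.

Lemma le_gmax a b : le a (gmax a b) /\ le b (gmax a b).
Proof.
rewrite /gmax /le; case: excluded_middle_informative => /= Hab; first by auto.
by case: HR => _ [Htot _]; case: (Htot a b) => [|[->|]]; auto.
Qed.

Lemma goedel_lt_gmax p q : goedel_lt p q -> le p.1 (gmax q.1 q.2) /\ le p.2 (gmax q.1 q.2).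
Proof.
case: HR => Htr _.
have le_trans x y z : le x y -> le y z -> le x z.
  by move=> [Hxy|->] [Hyz|<-]; [left; apply: Htr Hxy Hyz|left|left|right].
move=> Hpq; have Hle : le (gmax p.1 p.2) (gmax q.1 q.2) by case: Hpq => [|[]]; [left|right].
by have [H1 H2] := le_gmax p.1 p.2; split; apply: le_trans Hle.
Qed.

(* [None] stands for [gmax c d] itself. *)
Lemma card_le_goedel_seg c d :
  card_le (seg goedel_lt (c, d)) (option (seg R (gmax c d)) * option (seg R (gmax c d))).
Proof.
set m := gmax c d.
pose cut x : option (seg R m) :=
  if excluded_middle_informative (R x m) is left Hx then Some (exist _ x Hx) else None.
have cut_inj x y : le x m -> le y m -> cut x = cut y -> x = y.
  rewrite /cut; case: excluded_middle_informative => Hx; case: excluded_middle_informative => Hy //.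
  - by move=> _ _ [].
  - by move=> [//|->] [//|->].
exists (fun s => (cut (sval s).1, cut (sval s).2)) => [[[a b] Hab] [[a' b'] Hab']] /= [].
have [Ha Hb] := goedel_lt_gmax Hab; have [Ha' Hb'] := goedel_lt_gmax Hab'.
move=> /(cut_inj a a' Ha Ha') Ea /(cut_inj b b' Hb Hb') Eb; subst a' b'.
by rewrite (proof_irrelevance _ Hab Hab').
Qed.

End GoedelOrder.

Definition square_absorbing A := ~ finite A -> card_le (A * A) A.

Lemma square_absorbing_card_eq A B :
  card_le A B -> card_le B A -> square_absorbing A -> square_absorbing B.
Proof.
move=> HAB HBA HA HB; have HAinf : ~ finite A by move/(finite_card_le HBA).
exact: card_le_trans (card_le_prod HBA HBA) (card_le_trans (HA HAinf) HAB).
Qed.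

(* If [A] is not below any of its segments, every Goedel segment of [A * A] is
   below [A], so [A * A] embeds as an initial segment of [A]. *)
Lemma square_absorbing_of_segments A (R : A -> A -> Prop) :
  strict_wellorder R -> (forall a, square_absorbing (seg R a)) -> square_absorbing A.
Proof.
move=> HR IH Hinf.
case: (classic (exists a, card_le A (seg R a))) => [[a Ha]|Hbig].
  have Hainf : ~ finite (seg R a) by move/(finite_card_le Ha).
  exact: card_le_trans (card_le_prod Ha Ha) (card_le_trans (IH a Hainf) (card_le_sig _)).
have Hsmall w : ~ card_le A (seg (goedel_lt R) w).
  case: w => c d Hle; have Hle' := card_le_trans Hle (card_le_goedel_seg HR c d).
  case: (classic (finite (seg R (gmax R c d)))) => Hfin.
    by apply: Hinf; apply: finite_card_le Hle' _; apply: finite_prod; apply: finite_option.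
  apply: Hbig; exists (gmax R c d); apply: card_le_trans Hle' _.
  have Hopt := infinite_card_le_option Hfin.
  exact: card_le_trans (card_le_prod Hopt Hopt) (IH _ Hfin).
have [f [Hmono _]] := segment_embedding (goedel_lt_wellorder HR) HR Hsmall.
exists f; exact: strict_mono_inj (goedel_lt_wellorder HR) (proj2 (proj2 HR)) Hmono.
Qed.

Lemma card_le_seg_seg A (R : A -> A -> Prop) (a : A) (u : seg R a) :
  (forall x y z, R x y -> R y z -> R x z) ->
  card_le (seg R (sval u)) (seg (fun x y : seg R a => R (sval x) (sval y)) u) /\
  card_le (seg (fun x y : seg R a => R (sval x) (sval y)) u) (seg R (sval u)).
Proof.
move=> Htr; split.
  exists (fun y : seg R (sval u) => exist (fun z : seg R a => R (sval z) (sval u))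
                     (exist _ (sval y) (Htr _ _ _ (proj2_sig y) (proj2_sig u))) (proj2_sig y)).
  by move=> y z /(f_equal (fun s => sval (sval s))) /= /sval_inj.
exists (fun z : seg (fun x y : seg R a => R (sval x) (sval y)) u =>
          exist (fun y => R y (sval u)) (sval (sval z)) (proj2_sig z)).
by move=> y z /(f_equal sval) /= /sval_inj /sval_inj.
Qed.

Lemma card_le_square A (R : A -> A -> Prop) :
  strict_wellorder R -> ~ finite A -> card_le (A * A) A.
Proof.
move=> HR; apply: (square_absorbing_of_segments HR).
case: (HR) => Htr [_ Hwf]; elim/(well_founded_ind Hwf) => a IH.
have HRa : strict_wellorder (fun x y : seg R a => R (sval x) (sval y)).
  by apply: strict_wellorder_preimage HR _; apply: sval_inj.
apply: (square_absorbing_of_segments HRa) => u.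
have [Hle Hge] := card_le_seg_seg u Htr.
exact: square_absorbing_card_eq Hle Hge (IH _ (proj2_sig u)).
Qed.

Definition regular K (ltK : K -> K -> Prop) :=
  forall P : K -> Prop, card_lt {x | P x} K -> exists y, forall x, P x -> ltK x y.

(* Otherwise every fibre is bounded; fewer than [K] bounds are bounded in turn
   by some [v], which then lies below the bound of its own fibre. *)
Lemma regular_fiber K (ltK : K -> K -> Prop) Y (g : K -> Y) :
  strict_wellorder ltK -> regular ltK -> card_lt Y K -> exists y, card_le K {k | g k = y}.
Proof.
move=> [Htr [_ Hwf]] Hreg HY; apply: NNPP => Hsmall.
have Hbound y : exists u, forall x, g x = y -> ltK x u.
  apply: (Hreg (fun x => g x = y)); split; first exact: card_le_sig.
  by move=> HK; apply: Hsmall; exists y.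
pose u y := proj1_sig (constructive_indefinite_description _ (Hbound y)).
have Hu x : ltK x (u (g x)).
  by rewrite /u; case: constructive_indefinite_description => v /=; apply.
have [v Hv] := Hreg _ (card_le_lt_trans (card_le_image u) HY).
exact: wf_irrefl Hwf v (Htr _ _ _ (Hu v) (Hv _ (ex_intro _ (g v) erefl))).
Qed.

Lemma disjoint_family_inj K (ltK : K -> K -> Prop) S (RS : S -> S -> Prop) F a :
  strict_wellorder RS -> well_founded ltK -> disjoint_family ltK RS F -> injective (F a).
Proof. by move=> HRS HwfK [Hinc _]; apply: strict_mono_inj HRS HwfK (Hinc a). Qed.

Lemma disjoint_family_comp K (ltK : K -> K -> Prop) S (RS : S -> S -> Prop) F (e : K -> K) :
  injective e -> disjoint_family ltK RS F -> disjoint_family ltK RS (F \o e).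
Proof.
move=> He [Hinc [Hne Hdisj]]; split; [|split] => [a|a b Hab|a b Hab].
- exact: Hinc.
- by apply: Hne => /He.
- by apply: Hdisj => /He.
Qed.

(** * Recolouring *)

Section Signatures.
Variables (I L : Type) (inhL : inhabited L).

Definition separator (g : I -> L -> bool) (i j : I) : L :=
  epsilon inhL (fun l => g i l <> g j l).

Definition signature (g : I -> L -> bool) (i j : I) : L * bool :=
  (separator g i j, g i (separator g i j)).

Definition agrees (sg : I -> I -> L * bool) (phi : L -> bool) (k : I) :=
  forall l, l <> k -> phi (sg k l).1 = (sg k l).2.

Definition decode_index (sg : I -> I -> L * bool) (phi : L -> bool) : option I :=
  opick (agrees sg phi).

Lemma separatorP g i j : injective g -> i <> j -> g i (separator g i j) <> g j (separator g i j).
Proof.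
move=> Hg Hij; apply: (epsilon_spec inhL (fun l => g i l <> g j l)).
apply: NNPP => Hsame; apply: Hij; apply: Hg; apply: functional_extensionality => l.
by apply: NNPP => Hl; apply: Hsame; exists l.
Qed.

Lemma decode_index_signature g x : injective g -> decode_index (signature g) (g x) = Some x.
Proof.
move=> Hg; apply: opick_unique => k; split=> [Hk|->]; last by move=> l _.
apply: NNPP => Hkx; apply: (separatorP Hg Hkx).
by symmetry; apply: (Hk x) => Exk; apply: Hkx.
Qed.

End Signatures.

Section Recolouring.
Variables (K : Type) (ltK : K -> K -> Prop) (L X T Z : Type).
Variables (h : K -> L -> bool) (eT : T -> K).
Hypotheses (HK : strict_wellorder ltK) (Hreg : regular ltK).
Hypotheses (HnatK : card_le nat K) (HLK : card_le L K).
Hypotheses (HZ : is_pow_lt L X Z) (HZK : card_lt Z K) (HZT : card_le Z T).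
Hypotheses (Hh : injective h) (HeT : injective eT) (HTT : is_pow_lt T X T).
Hypothesis Hbool : card_lt bool X.

Lemma infinite_L : ~ finite L.
Proof.
move=> HL; apply: nat_not_finite; apply: finite_card_le HnatK _.
exact: finite_card_le (ex_intro _ h Hh) (finite_arrow_bool HL).
Qed.

Lemma card_le_square_L : card_le (L * L) L.
Proof.
have [e He] := HLK; exact: card_le_square (strict_wellorder_preimage HK He) infinite_L.
Qed.

Lemma card_le_bool_L : card_le bool L.
Proof.
have [e He] := infinite_card_le_nat infinite_L.
by exists (fun b : bool => e b) => b b' /He; case: b b' => [] [].
Qed.

Lemma card_le_L_times_bool : card_le (L * bool) L.
Proof. exact: card_le_trans (card_le_prod (card_le_refl L) card_le_bool_L) card_le_square_L. Qed.

Lemma card_le_L_Z : card_le L Z.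
Proof.
have Hunit : card_lt unit X.
  by apply: card_le_lt_trans Hbool; exists (fun _ => true) => [[] []].
apply: card_le_trans (proj1 HZ _ Hunit).
by exists (fun l (_ : unit) => l) => l l' /(f_equal (@^~ tt)).
Qed.

Lemma card_le_square_T : card_le (T * T) T.
Proof.
apply: card_le_trans (proj1 HTT _ Hbool).
exists (fun q b => if b then q.1 else q.2) => [[a b] [a' b']] E.
by have /= -> := f_equal (@^~ true) E; have /= -> := f_equal (@^~ false) E.
Qed.

Lemma card_lt_signatures S (RS : S -> S -> Prop) :
  strict_wellorder RS -> card_lt S X -> card_lt (S -> S -> L * bool) K.
Proof.
move=> HRS HSX; apply: card_le_lt_trans HZK.
apply: card_le_trans (card_le_arrow_cod _ (card_le_arrow_cod _ card_le_L_times_bool)) _.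
apply: card_le_trans (card_le_curry _ _ _) _.
have [b2L _] := card_le_bool_L; have l0 := b2L true.
case: (classic (finite S)) => HS.
  exact: card_le_trans (card_le_finite_arrow l0 card_le_square_L (finite_prod HS HS)) card_le_L_Z.
exact: card_le_trans (card_le_arrow_dom l0 (card_le_square HRS HS)) (proj1 HZ _ HSX).
Qed.

Lemma card_lt_T S : card_lt S X -> card_lt S T.
Proof.
move=> HSX.
have HboolT : card_le bool T := card_le_trans card_le_bool_L (card_le_trans card_le_L_Z HZT).
have HpowT : card_le (S -> bool) T.
  exact: card_le_trans (card_le_arrow_cod S HboolT) (proj1 HTT _ HSX).
split; first exact: card_le_trans (card_le_arrow_bool S) HpowT.
by move=> HTS; apply: (@cantor S); apply: card_le_trans HpowT HTS.
Qed.

Let RT (a b : T) := ltK (eT a) (eT b).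

(* Segments of [T] of size below [X] serve as canonical index types of size
   below [X]; a code is a pair of matrices indexed by one of them. *)
Definition matrix_pair (t : T) :=
  ((seg RT t -> seg RT t -> L * bool) * (seg RT t -> seg RT t -> T))%type.

Definition code := {t : {t : T | card_lt (seg RT t) X} & matrix_pair (sval t)}.

Lemma card_le_matrix_pair t : card_lt (seg RT t) X -> card_le (matrix_pair t) T.
Proof.
move=> Ht; have HpowT := proj1 HTT _ Ht.
have HLT := card_le_trans card_le_L_times_bool (card_le_trans card_le_L_Z HZT).
apply: card_le_trans (card_le_prod (card_le_arrow_cod _ (card_le_arrow_cod _ HLT))
                                   (card_le_refl _)) _.
apply: card_le_trans (card_le_arrow_pair _ _ _) _.
apply: card_le_trans (card_le_arrow_cod _ (card_le_arrow_pair _ _ _)) _.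
apply: card_le_trans (card_le_arrow_cod _ (card_le_arrow_cod _ card_le_square_T)) _.
exact: card_le_trans (card_le_arrow_cod _ HpowT) HpowT.
Qed.

Lemma card_le_code : card_le code T.
Proof.
apply: card_le_trans (card_le_sigT (fun t => card_le_matrix_pair (proj2_sig t))) _.
exact: card_le_trans (card_le_prod (card_le_sig _) (card_le_refl T)) card_le_square_T.
Qed.

Definition recolour (enc : code -> T) (c : K -> K -> T) (a b : K) : T :=
  if partial_inv enc (c a b) is Some (existT _ (sg, tau)) then
    if (decode_index sg (h a), decode_index sg (h b)) is (Some i, Some j) then tau i j
    else c a b
  else c a b.

Lemma recolour_pr0 M (p : K -> K -> M) enc c :
  injective enc -> pr1_witness ltK X p c -> pr0_witness ltK X p (recolour enc c).
Proof.
move=> Henc Hc S RS HRS HSX F HF tau.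
have [b2L _] := card_le_bool_L; have inhL := inhabits (b2L true).
pose sgn a := signature inhL (fun s => h (F a s)).
have [sg [e He]] := regular_fiber sgn HK Hreg (card_lt_signatures HRS HSX).
pose e' a := sval (e a).
have He' : injective e' := inj_comp (@sval_inj _ _) He.
have [t0 [i [j [HiK HjK]]]] :=
  segment_iso HRS (strict_wellorder_preimage HK HeT) (card_lt_T HSX).
have Ht0 : card_lt (seg RT t0) X := card_le_lt_trans (ex_intro _ j (can_inj HjK)) HSX.
pose code_of m : code :=
  existT _ (exist _ t0 Ht0) (fun k l => sg (j k) (j l), fun k l => tau (j k) (j l) m).
have Hdecode a s : decode_index (fun k l => sg (j k) (j l)) (h (F (e' a) s)) = Some (i s).
  rewrite -(proj2_sig (e a)) -{1}(HiK s).
  apply: (decode_index_signature inhL (g := fun k => h (F (e' a) (j k)))).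
  apply: inj_comp Hh (inj_comp _ (can_inj HjK)).
  exact: disjoint_family_inj HRS (proj2 (proj2 HK)) HF.
have [x [y [Hlt Hxy]]] := Hc S RS HRS HSX (F \o e') (disjoint_family_comp He' HF)
                          (fun m => enc (code_of m)).
exists (e' x), (e' y); split=> // s s'.
by rewrite /recolour Hxy partial_invK //= !Hdecode !HiK.
Qed.

Lemma pr0_of_pr1 M (p : K -> K -> M) : pr1 ltK T X p -> pr0 ltK T X p.
Proof.
move=> [c Hc]; have [enc Henc] := card_le_code.
by exists (recolour enc c); apply: recolour_pr0.
Qed.

End Recolouring.

Lemma pr1_of_pr0 K (ltK : K -> K -> Prop) M T X (p : K -> K -> M) :
  pr0 ltK T X p -> pr1 ltK T X p.
Proof.
move=> [c Hc]; exists c => S RS HRS HSX F HF tau.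
exact: Hc S RS HRS HSX F HF (fun _ _ => tau).
Qed.

(* For [chi <= 2] the index types have at most one element, so a matrix of
   colourings is a single colouring. *)
Lemma pr0_of_pr1_chi_le2 K (ltK : K -> K -> Prop) M T X (p : K -> K -> M) :
  K -> ~ card_lt bool X -> pr1 ltK T X p -> pr0 ltK T X p.
Proof.
move=> k0 Hbool [c Hc]; exists c => S RS HRS HSX F HF tau.
have HS (s s' : S) : s = s'.
  apply: NNPP => Hss'; apply: Hbool; apply: card_le_lt_trans HSX.
  exists (fun b : bool => if b then s else s') => b b'.
  by case: b; case: b' => //= E; case: Hss'; rewrite E.
case: (classic (inhabited S)) => [[s0]|HS0]; last by exists k0, k0; split=> s; case: HS0.
have [x [y [Hlt Hxy]]] := Hc S RS HRS HSX F HF (tau s0 s0).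
by exists x, y; split=> // s s'; rewrite (HS s s0) (HS s' s0).
Qed.

Theorem theoremB (K : Type) (ltK : K -> K -> Prop) (M L X T : Type) :
  regular_uncountable ltK ->
  card_le M K -> card_le L K -> card_le X K -> card_le T K ->
  (* lambda^{<chi} < kappa and lambda^{<chi} <= theta (= theta^{<chi}) *)
  (exists Z : Type, is_pow_lt L X Z /\ card_lt Z K /\ card_le Z T) ->
  (* kappa <= 2^lambda *)
  card_le K (L -> bool) ->
  (* theta^{<chi} = theta *)
  is_pow_lt T X T ->
  forall p : K -> K -> M, @pr1 K ltK M T X p <-> @pr0 K ltK M T X p.
Proof.
move=> [[HK _] [[HnatK _] Hreg]] _ HLK _ [eT HeT] [Z [HZ [HZK HZT]]] [h Hh] HTT p.
split; last exact: pr1_of_pr0.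
have [k0 _] := HnatK.
case: (classic (card_lt bool X)) => Hbool; last exact: pr0_of_pr1_chi_le2 (k0 0) Hbool.
exact: (pr0_of_pr1 HK Hreg HnatK HLK HZ HZK HZT Hh HeT HTT Hbool (p := p)).
Qed.
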